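(* Let $\Omega$ be a state space with finitely many extreme points and positive cone $V_+$. If a linear map $J:V\to V$ is strictly positive with respect to an inner product $(\cdot,\cdot)$ on $V$ and satisfies $J(V_+)=V_+$, then for each extreme point $\omega^{\mathrm{ext}}$ of $\Omega$ there exists $\mu(\omega^{\mathrm{ext}})>0$ such that $J(\omega^{\mathrm{ext}})=\mu(\omega^{\mathrm{ext}})\omega^{\mathrm{ext}}$.
   Context: $V=\mathbb R^{N+1}$. A state space $\Omega\subset V$ is a compact convex set with $\mathrm{span}(\Omega)=V$ and $0\notin\mathrm{aff}(\Omega)$; $V_+=\{\lambda\omega:\lambda\ge0,\omega\in\Omega\}$. A linear map $J$ is strictly positive with respect to $(\cdot,\cdot)$ if $(x,Jy)=(Jx,y)$ for all $x,y$ and $(x,Jx)>0$ for all nonzero $x$. *)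

From HB Require Import structures.
From mathcomp Require Import all_boot all_order all_algebra.
From mathcomp Require Import all_classical all_reals all_analysis.
Set Implicit Arguments. Unset Strict Implicit. Unset Printing Implicit Defensive.
Import Order.TTheory GRing.Theory Num.Theory.
Import numFieldNormedType.Exports.
Local Open Scope classical_set_scope.
Local Open Scope ring_scope.

(* V = R^(N+1), realised as row vectors 'rV[R]_(N.+1); a linear map
   J : V -> V is a matrix acting on the right: x |-> x *m J. *)

Definition convex_set (R : realType) (n : nat) (S : set 'rV[R]_n) : Prop :=
  forall x y t, S x -> S y -> 0 <= t -> t <= 1 -> S (t *: x + (1 - t) *: y).

Definition extreme_point (R : realType) (n : nat) (S : set 'rV[R]_n)
  (w : 'rV[R]_n) : Prop :=
  S w /\ forall x y t, S x -> S y -> 0 < t -> t < 1 ->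
    w = t *: x + (1 - t) *: y -> x = w /\ y = w.

Definition spans_all (R : realType) (n : nat) (S : set 'rV[R]_n) : Prop :=
  forall v : 'rV[R]_n, exists (k : nat) (c : 'I_k -> R) (w : 'I_k -> 'rV[R]_n),
    (forall i, S (w i)) /\ v = \sum_(i < k) c i *: w i.

Definition in_aff (R : realType) (n : nat) (S : set 'rV[R]_n) (v : 'rV[R]_n) : Prop :=
  exists (k : nat) (c : 'I_k -> R) (w : 'I_k -> 'rV[R]_n),
    (forall i, S (w i)) /\ \sum_(i < k) c i = 1 /\ v = \sum_(i < k) c i *: w i.

Definition state_space (R : realType) (N : nat) (Om : set 'rV[R]_N.+1) : Prop :=
  compact Om /\ convex_set Om /\ spans_all Om /\ ~ in_aff Om 0.

Definition pos_cone (R : realType) (n : nat) (Om : set 'rV[R]_n) : set 'rV[R]_n :=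
  [set v | exists lam om, 0 <= lam /\ Om om /\ v = lam *: om].

Definition inner_product (R : realType) (n : nat) (ip : 'rV[R]_n -> 'rV[R]_n -> R) : Prop :=
  (forall a x y z, ip (a *: x + y) z = a * ip x z + ip y z) /\
  (forall x y, ip x y = ip y x) /\
  (forall x, x != 0 -> 0 < ip x x).

Definition strictly_positive (R : realType) (n : nat) (ip : 'rV[R]_n -> 'rV[R]_n -> R)
  (J : 'M[R]_n) : Prop :=
  (forall x y, ip x (y *m J) = ip (x *m J) y) /\
  (forall x, x != 0 -> 0 < ip x (x *m J)).

From HB Require Import structures.
From mathcomp Require Import all_boot all_order all_algebra.
From mathcomp Require Import all_classical all_reals all_analysis.
Set Implicit Arguments. Unset Strict Implicit. Unset Printing Implicit Defensive.
Import Order.TTheory GRing.Theory Num.Theory.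
Import numFieldNormedType.Exports.
Local Open Scope classical_set_scope.
Local Open Scope ring_scope.

(* A strictly positive J is injective and maps the cone V_+ onto itself, so it sends
   extreme rays to extreme rays: w J = c e with c > 0 and e extreme.  With finitely
   many extreme rays the orbit of w returns, w J^k = rho w with rho > 0.  Put
   mu = rho^(1/k) and x = w J - mu w; then
   x (sum_i mu^(k-1-i) J^i) = w J^k - mu^k w = 0, whereas
   (x, x sum_i mu^(k-1-i) J^i) > 0 for x <> 0 because every power of J is strictly
   positive.  Hence x = 0. *)

Section StrictlyPositive.
Variables (R : realType) (n : nat) (ip : 'rV[R]_n -> 'rV[R]_n -> R) (J : 'M[R]_n).
Hypotheses (ip_inner : inner_product ip) (J_pos : strictly_positive ip J).

Lemma ip0l z : ip 0 z = 0.
Proof.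
have [linl _] := ip_inner; apply: (addrI (ip 0 z)).
by rewrite addr0 -{1}(mul1r (ip 0 z)) -linl scale1r addr0.
Qed.

Lemma ip0r z : ip z 0 = 0.
Proof. by have [_ [-> _]] := ip_inner; rewrite ip0l. Qed.

Lemma ip_sumr k (c : 'I_k -> R) (v : 'I_k -> 'rV[R]_n) x :
  ip x (\sum_(i < k) c i *: v i) = \sum_(i < k) c i * ip x (v i).
Proof.
have [linl [ipC _]] := ip_inner.
apply: (big_rec2 (fun a b => ip x b = a)); first exact: ip0r.
by move=> i y1 y2 _ <-; rewrite ipC linl !(ipC x).
Qed.

Lemma mulmx_neq0 (x : 'rV[R]_n) : x != 0 -> x *m J != 0.
Proof.
move=> x_neq0; apply: contraTneq (J_pos.2 x x_neq0) => ->.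
by rewrite ip0r ltxx.
Qed.

Lemma mulmx_inj : injective (fun x : 'rV[R]_n => x *m J).
Proof.
move=> x y /eqP; rewrite -subr_eq0 -mulmxBl => xyJ0.
by apply/eqP; rewrite -subr_eq0; apply: contraTT xyJ0; apply: mulmx_neq0.
Qed.

(* Self-adjointness gives [ip x (x *m J ^+ m.+2) = ip y (y *m J ^+ m)] with
   [y = x *m J], so a two-step induction reduces to m = 0 and m = 1. *)
Lemma ip_mulmx_expn_gt0 m (x : 'rV[R]_n) : x != 0 -> 0 < ip x (x *m J ^+ m).
Proof.
suff Pm : (forall x, x != 0 -> 0 < ip x (x *m J ^+ m)) /\
          (forall x, x != 0 -> 0 < ip x (x *m J ^+ m.+1)) by apply: Pm.1.
elim: m => [|m [IHm IHm1]]; split => // {}x x_neq0.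
- by rewrite expr0 mulmx1; have [_ [_ ->]] := ip_inner.
- by rewrite expr1; apply: J_pos.2.
have -> : x *m J ^+ m.+2 = x *m J *m J ^+ m *m J.
  by rewrite exprS exprSr -!mulmxE !mulmxA.
by rewrite J_pos.1; apply/IHm/mulmx_neq0.
Qed.

Lemma ip_sum_expn_gt0 k (c : 'I_k.+1 -> R) (x : 'rV[R]_n) :
  (forall i, 0 < c i) -> x != 0 -> 0 < ip x (x *m \sum_(i < k.+1) c i *: J ^+ i).
Proof.
move=> c_gt0 x_neq0.
rewrite mulmx_sumr; under eq_bigr do rewrite -scalemxAr.
rewrite ip_sumr big_ord_recl.
apply: ltr_pwDl; first by rewrite mulr_gt0 ?ip_mulmx_expn_gt0.
by apply: sumr_ge0 => i _; rewrite mulr_ge0 ?ltW ?ip_mulmx_expn_gt0.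
Qed.

Lemma subr_expn_scalar_factor k mu : J ^+ k - (mu ^+ k)%:M =
  (J - mu%:M) *m \sum_(i < k) mu ^+ (k.-1 - i) *: J ^+ i.
Proof.
apply: oppr_inj; rewrite opprB -mulNmx opprB rmorphXn subrXX_comm; last first.
  exact: comm_scalar_mx.
by congr (_ * _); apply: eq_bigr => i _; rewrite -rmorphXn -mulmxE mul_scalar_mx.
Qed.

Lemma eigenvector_from_power (w : 'rV[R]_n) k rho : (0 < k)%N -> 0 < rho ->
  w *m J ^+ k = rho *: w -> exists mu, 0 < mu /\ w *m J = mu *: w.
Proof.
case: k => // k _ rho_gt0 wJk.
pose mu := rho `^ k.+1%:R^-1.
have mu_gt0 : 0 < mu by apply: powR_gt0.
have muk : mu ^+ k.+1 = rho.
  by rewrite -powR_mulrn ?powR_ge0 // -powRrM mulVf ?powRr1 ?ltW // pnatr_eq0.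
exists mu; split => //; apply/eqP; rewrite -subr_eq0; apply/negPn/negP => x_neq0.
have := ip_sum_expn_gt0 (c := fun i : 'I_k.+1 => mu ^+ (k - i))
  (fun i => exprn_gt0 _ mu_gt0) x_neq0.
rewrite -mul_mx_scalar -mulmxBr -mulmxA -subr_expn_scalar_factor.
by rewrite !mulmxBr !mul_mx_scalar wJk muk subrr ip0r ltxx.
Qed.

End StrictlyPositive.

Lemma finite_range_collision T (S : set T) (f : nat -> T) :
  finite_set S -> (forall m, S (f m)) -> exists i j, (i < j)%N /\ f i = f j.
Proof.
move=> S_fin fS; apply: contrapT => no_collision.
have f_inj : {in [set: nat] &, injective f}.
  move=> i j _ _ fij; case: (ltngtP i j) => // ij; exfalso; apply: no_collision.
  - by exists i, j.
  - by exists j, i.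
apply: infinite_nat; rewrite -(eq_finite_set (inj_card_eq f_inj)).
by apply: sub_finite_set S_fin; move=> _ [m _ <-].
Qed.

Section ExtremeRays.
Variables (R : realType) (n : nat) (Om : set 'rV[R]_n) (J : 'M[R]_n).
Hypothesis Om_aff : ~ in_aff Om 0.

Lemma state_lin_rel_sum_eq0 k (c : 'I_k -> R) (v : 'I_k -> 'rV[R]_n) :
  (forall i, Om (v i)) -> \sum_(i < k) c i *: v i = 0 -> \sum_(i < k) c i = 0.
Proof.
move=> Omv cv0; apply: contrapT => /eqP s_neq0; apply: Om_aff.
exists k, (fun i => c i / \sum_(j < k) c j), v; split=> //; split.
  by rewrite -mulr_suml divff.
rewrite (eq_bigr (fun i => (\sum_(j < k) c j)^-1 *: (c i *: v i))).
  by rewrite -scaler_sumr cv0 scaler0.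
by move=> i _; rewrite scalerA mulrC.
Qed.

Lemma state_lin_rel3 (x y z : 'rV[R]_n) (p q r : R) : Om x -> Om y -> Om z ->
  p *: x + q *: y + r *: z = 0 -> p + q + r = 0.
Proof.
move=> Ox Oy Oz.
have := @state_lin_rel_sum_eq0 3 (fun i => [:: p; q; r]`_i) (fun i => [:: x; y; z]`_i).
rewrite !big_ord_recl !big_ord0 /= !addr0 !addrA; apply.
by case=> [[|[|[]]]].
Qed.

Lemma state_neq0 x : Om x -> x != 0.
Proof.
move=> Ox; apply/eqP => x0; have := @state_lin_rel3 x x x 1 0 0 Ox Ox Ox.
by rewrite x0 !scaler0 !addr0 => /(_ erefl) /eqP; rewrite oner_eq0.
Qed.

Lemma state_scale_eq1 x y a : Om x -> Om y -> a *: x = y -> a = 1.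
Proof.
move=> Ox Oy axy; have := @state_lin_rel3 y x x 1 (- a) 0 Oy Ox Ox.
rewrite scale1r scaleNr axy subrr scale0r !addr0 => /(_ erefl) /eqP.
by rewrite subr_eq0 eq_sym => /eqP.
Qed.

Lemma pos_cone_state x : Om x -> pos_cone Om x.
Proof. by move=> Ox; exists 1, x; rewrite scale1r. Qed.

Hypotheses (J_inj : injective (fun x : 'rV[R]_n => x *m J))
           (J_cone : (fun x => x *m J) @` pos_cone Om = pos_cone Om).

Lemma state_mulmx w : Om w -> exists c e, 0 < c /\ Om e /\ w *m J = c *: e.
Proof.
move=> Ow; have : pos_cone Om (w *m J).
  by rewrite -J_cone; exists w => //; apply: pos_cone_state.
case=> c [e [c_ge0 [Oe wJ]]]; exists c, e; split => //.
rewrite lt_def c_ge0 andbT; move: (state_neq0 Ow); apply: contra_neq => c0.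
by apply: J_inj; rewrite /= wJ c0 scale0r mul0mx.
Qed.

Lemma state_preimage x : Om x -> exists l a, 0 < l /\ Om a /\ (l *: a) *m J = x.
Proof.
move=> Ox; have : pos_cone Om x by apply: pos_cone_state.
rewrite -J_cone => -[_ [l [a [l_ge0 [Oa ->]]]] laJ]; exists l, a; split => //.
rewrite lt_def l_ge0 andbT; move: (state_neq0 Ox); apply: contra_neq => l0.
by rewrite -laJ l0 scale0r mul0mx.
Qed.

Lemma extreme_mulmx w : extreme_point Om w ->
  exists c e, 0 < c /\ extreme_point Om e /\ w *m J = c *: e.
Proof.
move=> [Ow w_ext]; have [c [e [c_gt0 [Oe wJ]]]] := state_mulmx Ow.
exists c, e; split => //; split => //; split => // x y t Ox Oy t_gt0 t_lt1 e_xy.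
have [a [x' [a_gt0 [Ox' x'J]]]] := state_preimage Ox.
have [b [y' [b_gt0 [Oy' y'J]]]] := state_preimage Oy.
pose p := c * t * a; pose q := c * (1 - t) * b.
have w_xy : w = p *: x' + q *: y'.
  apply: J_inj; rewrite /= wJ e_xy -x'J -y'J mulmxDl -!scalemxAl.
  by rewrite !scalerDr !scalerA.
have pq1 : p + q = 1.
  have := @state_lin_rel3 _ _ _ p q (-1) Ox' Oy' Ow.
  by rewrite scaleN1r -w_xy subrr => /(_ erefl) /eqP; rewrite subr_eq0 => /eqP.
have p_gt0 : 0 < p by rewrite !mulr_gt0.
have q_gt0 : 0 < q by rewrite !mulr_gt0 // subr_gt0.
have p_lt1 : p < 1 by rewrite -pq1 ltrDl.
have q_def : q = 1 - p by rewrite -pq1 addrC addKr.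
have [x'w y'w] := w_ext x' y' p Ox' Oy' p_gt0 p_lt1 ltac:(by rewrite -q_def).
subst x' y'.
have fix_e z l : Om z -> (l *: w) *m J = z -> z = e.
  move=> Oz; rewrite -scalemxAl wJ scalerA => lce.
  by rewrite -lce (state_scale_eq1 Oe Oz lce) scale1r.
by split; [apply: (fix_e x a) | apply: (fix_e y b)].
Qed.

Lemma extreme_mulmx_expn m w : extreme_point Om w ->
  exists c e, 0 < c /\ extreme_point Om e /\ w *m J ^+ m = c *: e.
Proof.
move=> w_ext; elim: m => [|m [c [e [c_gt0 [e_ext wJm]]]]].
  by exists 1, w; rewrite expr0 mulmx1 scale1r.
have [c' [e' [c'_gt0 [e'_ext eJ]]]] := extreme_mulmx e_ext.
exists (c * c'), e'; split; first exact: mulr_gt0.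
by rewrite exprSr -mulmxE mulmxA wJm -scalemxAl eJ scalerA.
Qed.

Lemma mulmx_expn_inj m : injective (fun x : 'rV[R]_n => x *m J ^+ m).
Proof.
elim: m => [|m IHm] x y /=; first by rewrite expr0 !mulmx1.
by rewrite exprSr -mulmxE !mulmxA => /J_inj /IHm.
Qed.

Hypothesis extreme_fin : finite_set (extreme_point Om).

Lemma extreme_expn_eigen w : extreme_point Om w ->
  exists k rho, (0 < k)%N /\ 0 < rho /\ w *m J ^+ k = rho *: w.
Proof.
move=> w_ext.
have /choice [c /choice [e ce]] := fun m => extreme_mulmx_expn m w_ext.
have [i [j [lt_ij e_ij]]] := finite_range_collision extreme_fin (fun m => (ce m).2.1).
have [ci_gt0 [_ wJi]] := ce i; have [cj_gt0 [_ wJj]] := ce j.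
exists (j - i)%N, (c j / c i); split; first by rewrite subn_gt0.
split; first by rewrite divr_gt0.
apply: (@mulmx_expn_inj i) => /=.
rewrite -mulmxA mulmxE -exprD subnK ?(ltnW lt_ij) // wJj -scalemxAl wJi scalerA.
by rewrite divfK ?gt_eqF // e_ij.
Qed.

End ExtremeRays.

Theorem lemmaB3 (R : realType) (N : nat) (Om : set 'rV[R]_N.+1)
  (ip : 'rV[R]_N.+1 -> 'rV[R]_N.+1 -> R) (J : 'M[R]_N.+1) :
  state_space Om ->
  finite_set (extreme_point Om) ->
  inner_product ip ->
  strictly_positive ip J ->
  (fun x => x *m J) @` pos_cone Om = pos_cone Om ->
  forall w, extreme_point Om w ->
    exists mu : R, 0 < mu /\ w *m J = mu *: w.
Proof.
move=> [_ [_ [_ Om_aff]]] extreme_fin ip_inner J_pos J_cone w w_ext.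
have J_inj := mulmx_inj ip_inner J_pos.
have [k [rho [k_gt0 [rho_gt0 wJk]]]] :=
  extreme_expn_eigen Om_aff J_inj J_cone extreme_fin w_ext.
exact: (eigenvector_from_power ip_inner J_pos k_gt0 rho_gt0 wJk).
Qed.
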